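(* Let $a,d$ be real numbers and let $A_{n,k}(a,d)$ be the general Eulerian numbers defined below. Then for every integer $n\ge 1$ and every positive integer $i$, $$(a+(i-1)d)^n=\sum_{j=-1}^{n-1}A_{n,j}(a,d)\binom{i+j}{n}.$$
   Context: For real numbers $a,d$, the general Eulerian numbers $A_{n,k}(a,d)$ (integers $n\ge 0$, $k$) are defined by $A_{0,-1}(a,d)=1$, $A_{n,k}(a,d)=0$ whenever $k\ge n$ or $k\le -2$ (in particular $A_{0,k}=0$ for $k\neq -1$), and for $n\ge 1$, $-1\le k\le n-1$: $$A_{n,k}(a,d)=(-a+(k+2)d)A_{n-1,k}(a,d)+(a+(n-k-1)d)A_{n-1,k-1}(a,d).$$ For a nonnegative integer $x$ and $n\ge 0$, $\binom{x}{n}=x(x-1)\cdots(x-n+1)/n!$ (so it is $0$ when $x<n$). *)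

From mathcomp Require Import all_boot all_order all_algebra.
From mathcomp Require Import reals.
Set Implicit Arguments. Unset Strict Implicit. Unset Printing Implicit Defensive.
Import Order.TTheory GRing.Theory Num.Theory.
Local Open Scope ring_scope.

Fixpoint genEuler (R : realType) (a d : R) (n : nat) (k : int) {struct n} : R :=
  match n with
  | 0%N => if k == (-1)%R then 1 else 0
  | n'.+1 =>
      if ((-1)%R <= k) && (k <= (n'%:Z)) then
        (- a + (k + 2)%:~R * d) * genEuler a d n' k
        + (a + (n'%:Z - k)%:~R * d) * genEuler a d n' (k - 1)
      else 0
  end.

From mathcomp Require Import all_boot all_order all_algebra.
From mathcomp Require Import reals.
From mathcomp Require Import ring zify.
Import Order.TTheory GRing.Theory Num.Theory.
Local Open Scope ring_scope.

(* Induction on n, starting at n = 0.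
   Multiplying the identity for n by a + (i-1)d, each
   binomial C(N, n) with N = i + j is rewritten through Pascal's rule and
   (n+1) C(N+1, n+1) = (N+1) C(N, n) as a combination of C(N, n+1) and
   C(N+1, n+1) whose coefficients are exactly those of the recurrence for A;
   regrouping the sum by the binomial C(i + j, n+1) gives the identity for n+1. *)

Lemma bin_affine_split (R : comPzRingType) (a d : R) (N m n : nat) :
  (a + (N%:R - m%:R) * d) * ('C(N, n))%:R =
  (- a + (m%:R + 1) * d) * ('C(N, n.+1))%:R
  + (a + (n%:R - m%:R) * d) * ('C(N.+1, n.+1))%:R.
Proof.
have pascal : ('C(N, n.+1))%:R = ('C(N.+1, n.+1))%:R - ('C(N, n))%:R :> R.
  by rewrite binS natrD addrK.
have diag : (n%:R + 1) * ('C(N.+1, n.+1))%:R = (N%:R + 1) * ('C(N, n))%:R :> R.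
  by rewrite !natr1 -!natrM -mul_bin_diag.
rewrite pascal.
transitivity (a * ('C(N, n))%:R + d * ((N%:R + 1) * ('C(N, n))%:R)
              - (m%:R + 1) * d * ('C(N, n))%:R); first by ring.
by rewrite -diag; ring.
Qed.

Section GenEuler.
Variables (R : realType) (a d : R).

Lemma genEuler_eq0 (n : nat) (k : int) :
  (n%:Z <= k) || (k < -1) -> genEuler a d n k = 0.
Proof.
case: n => [|n] /= k_out; first by case: eqP k_out => // ->.
case: ifP => // /andP[ge_k_m1 le_k_n]; case/orP: k_out; lia.
Qed.

Lemma genEulerS (n m : nat) : (m <= n.+1)%N ->
  genEuler a d n.+1 (m%:Z - 1) =
  (- a + (m%:R + 1) * d) * genEuler a d n (m%:Z - 1)
  + (a + (n%:R - m%:R + 1) * d) * genEuler a d n (m%:Z - 1 - 1).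
Proof.
move=> le_m_Sn /=.
have -> : (-1 <= m%:Z - 1) && (m%:Z - 1 <= n%:Z) by apply/andP; split; lia.
congr (_ * _ + _ * _).
  by rewrite (_ : m%:Z - 1 + 2 = m%:Z + 1) ?intrD //; lia.
by rewrite (_ : n%:Z - (m%:Z - 1) = n%:Z - m%:Z + 1); [rewrite intrD intrB | lia].
Qed.

Lemma sum_genEulerS (n : nat) (c : nat -> R) :
  \sum_(m < n.+2) genEuler a d n.+1 (m%:Z - 1) * c m =
  \sum_(m < n.+1) genEuler a d n (m%:Z - 1) *
    ((- a + (m%:R + 1) * d) * c m + (a + (n%:R - m%:R) * d) * c m.+1).
Proof.
under eq_bigr => m _ do rewrite (@genEulerS n m (ltn_ord m)) mulrDl.
rewrite big_split; under [RHS]eq_bigr => m _ do rewrite mulrDr.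
rewrite big_split; congr (_ + _).
  rewrite big_ord_recr /= genEuler_eq0 ?mulr0 ?mul0r ?addr0; last by lia.
  by apply: eq_bigr => m _; rewrite mulrCA mulrA.
rewrite big_ord_recl /= genEuler_eq0 ?mulr0 ?mul0r ?add0r; last by lia.
apply: eq_bigr => m _; rewrite /bump /= add1n.
rewrite (_ : m.+1%:Z - 1 - 1 = m%:Z - 1); last by lia.
by rewrite -natr1 opprD addrA subrK mulrCA mulrA.
Qed.

End GenEuler.

Theorem lemma2p3 (R : realType) (a d : R) (n i : nat) :
  (1 <= n)%N -> (1 <= i)%N ->
  (a + (i%:R - 1) * d) ^+ n =
  \sum_(m < n.+1) genEuler a d n (m%:Z - 1) * ('C(i + m - 1, n))%:R.
Proof.
case: i => // i _ _; rewrite -natr1 addrK.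
under eq_bigr => m _ do rewrite addSn subn1 /=.
elim: n => [|n IH]; first by rewrite big_ord1 /= bin0 mulr1.
rewrite exprS IH mulr_sumr (@sum_genEulerS R a d n (fun m => ('C(i + m, n.+1))%:R)).
apply: eq_bigr => m _; rewrite mulrCA addnS.
by rewrite -[i%:R](addrK m%:R) -natrD bin_affine_split.
Qed.
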